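(* Let $R=\Bbbk[x_1,\ldots,x_N]$ with maximal homogeneous ideal $\mathfrak m=(x_1,\ldots,x_N)$. Let $I$ be a non-zero monomial ideal of $R$ and $x$ a variable of $R$ such that $I:x=\mathfrak m$. Then $\operatorname{reg}(I)\le\max\{2,\operatorname{reg}(I+(x))\}$.
   Context: $\operatorname{reg}$ denotes Castelnuovo–Mumford regularity. *)

From mathcomp Require Import all_boot all_algebra.
Set Implicit Arguments. Unset Strict Implicit. Unset Printing Implicit Defensive.
Import GRing.Theory Num.Theory.

(* Monomials of R = k[x_1..x_N] are exponent vectors a : 'I_N -> nat.
   A monomial ideal is identified with its (upward closed) set of monomials. *)
Definition expo (N : nat) := {ffun 'I_N -> nat}.

Definition mono_ideal N (M : pred (expo N)) : Prop :=
  forall a b : expo N, M a -> (forall j, a j <= b j) -> M b.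

Definition zero_exp N : expo N := [ffun=> 0%N].
Definition unit_exp N (x : 'I_N) : expo N := [ffun j => nat_of_bool (j == x)].
Definition add_exp N (a b : expo N) : expo N := [ffun j => a j + b j].
Definition sub_set_exp N (a : expo N) (F : {set 'I_N}) : expo N :=
  [ffun j => a j - nat_of_bool (j \in F)].
Definition supp_exp N (a : expo N) : {set 'I_N} := [set j | 0 < a j].
Definition deg_exp N (a : expo N) : nat := \sum_j a j.

Definition plus_var N (M : pred (expo N)) (x : 'I_N) : pred (expo N) :=
  fun a => M a || (0 < a x).

(* Multidegree-a strand of the Koszul complex I (x) K(x_1..x_N):
   in homological degree i it has basis the F with |F| = i, e_F <= a and
   x^(a - e_F) in I. *)
Definition kvalid N (M : pred (expo N)) (a : expo N) (F : {set 'I_N}) : bool :=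
  (F \subset supp_exp a) && M (sub_set_exp a F).

(* Koszul differential d_i (row-vector convention: rows = source basis F of
   degree i, columns = target basis G), e_F |-> sum_{j in F} (-1)^{#{l in F, l<j}} x_j e_{F\j}. *)
Definition koszul_bd (k : fieldType) N (M : pred (expo N)) (a : expo N) (i : nat)
  : 'M[k]_(#|{set 'I_N}|) :=
  (\matrix_(r, c)
    (let F : {set 'I_N} := enum_val r in let G : {set 'I_N} := enum_val c in
     if [&& kvalid M a F, kvalid M a G, #|F| == i, G \subset F & #|F| == #|G|.+1]
     then \sum_(j in F :\: G) (-1) ^+ #|[set l in F | (l < j)%N]|
     else 0))%R.

(* beta_{i,a}(I) = dim_k Tor_i(I,k)_a = dim H_i of the a-strand above *)
Definition betti (k : fieldType) N (M : pred (expo N)) (i : nat) (a : expo N) : nat :=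
  #|[set F : {set 'I_N} | kvalid M a F & #|F| == i]|
  - \rank (koszul_bd k M a i) - \rank (koszul_bd k M a i.+1).

Definition reg_le (k : fieldType) N (M : pred (expo N)) (r : int) : Prop :=
  forall (i : nat) (a : expo N), betti k M i a != 0%N ->
    ((deg_exp a)%:Z - i%:Z <= r)%R.

(* The Betti number beta_{i,a} only depends on which monomials a - e_F,
   |F| <= i + 1, lie in the ideal, and these all have degree at least
   |a| - i - 1.  Since m ⊆ I : x, the only monomial of I + (x) outside I is x
   itself, so I and I + (x) have the same Betti numbers in every multidegree
   a with |a| - i > 2; the remaining nonzero Betti numbers of I satisfy
   |a| - i <= 2. *)
From mathcomp Require Import all_boot all_order all_algebra zify.
Set Implicit Arguments.
Unset Strict Implicit.
Unset Printing Implicit Defensive.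

Import Order.TTheory.
Local Open Scope ring_scope.

Section KoszulStrand.

Variables (k : fieldType) (N : nat).
Implicit Types (M : pred (expo N)) (a : expo N) (F : {set 'I_N}).

Lemma eq_koszul_bd M1 M2 a (i : nat) :
  (forall F, (#|F| <= i)%N -> kvalid M1 a F = kvalid M2 a F) ->
  koszul_bd k M1 a i = koszul_bd k M2 a i.
Proof.
move=> eqM; apply/matrixP => r c; rewrite !mxE /=.
set F := enum_val r; set G := enum_val c.
case: (eqVneq #|F| i) => [Fi|]; last by rewrite !(andFb, andbF).
case: (eqVneq #|F| #|G|.+1) => [FG|]; last by rewrite !(andFb, andbF).
by rewrite !eqM ?Fi //; lia.
Qed.

Lemma eq_betti M1 M2 a (i : nat) :
  (forall F, (#|F| <= i.+1)%N -> kvalid M1 a F = kvalid M2 a F) ->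
  betti k M1 i a = betti k M2 i a.
Proof.
move=> eqM; rewrite /betti (@eq_koszul_bd M1 M2 a i.+1 eqM).
rewrite (@eq_koszul_bd M1 M2 a i) => [|F leFi]; last exact/eqM/leqW.
congr (_ - _ - _)%N; apply: eq_card => F; rewrite !inE.
by case: (eqVneq #|F| i) => [Fi|]; rewrite ?andbF // eqM ?Fi.
Qed.

End KoszulStrand.

Lemma deg_sub_set_exp N (a : expo N) (F : {set 'I_N}) :
  F \subset supp_exp a -> deg_exp a = (deg_exp (sub_set_exp a F) + #|F|)%N.
Proof.
move=> /subsetP Fa; rewrite /deg_exp -sum1_card [X in (_ + X)%N]big_mkcond -big_split /=.
apply: eq_bigr => j _; rewrite ffunE.
case: (boolP (j \in F)) => [/Fa|_]; last by rewrite subn0 addn0.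
by rewrite inE => a_j_gt0 /=; lia.
Qed.

Lemma deg_unit_exp N (x : 'I_N) : deg_exp (unit_exp x) = 1%N.
Proof.
rewrite /deg_exp (eq_bigr (fun j => nat_of_bool (j == x))) => [|j _]; last first.
  by rewrite ffunE.
by rewrite -big_mkcond big_pred1_eq.
Qed.

Lemma add0_exp N (a : expo N) : add_exp (zero_exp N) a = a.
Proof. by apply/ffunP => j; rewrite !ffunE. Qed.

Lemma add_sub_unit_exp N (c : expo N) (x : 'I_N) :
  (0 < c x)%N -> c = add_exp (sub_set_exp c [set x]) (unit_exp x).
Proof.
move=> cx; apply/ffunP => j; rewrite !ffunE inE.
by case: (eqVneq j x) => [->|] /=; lia.
Qed.

Lemma plus_var_deg_gt1 N (M : pred (expo N)) (x : 'I_N) (c : expo N) :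
  (forall b, b != zero_exp N -> M (add_exp b (unit_exp x))) ->
  (1 < deg_exp c)%N -> plus_var M x c = M c.
Proof.
move=> m_sub_colon deg_c; rewrite /plus_var.
case: (boolP (M c)) => //= Mc; apply/negbTE; apply: contra Mc => cx.
rewrite (add_sub_unit_exp cx); apply: m_sub_colon; apply: contraTneq deg_c => c0.
by rewrite (add_sub_unit_exp cx) c0 add0_exp deg_unit_exp.
Qed.

Lemma betti_plus_var k N (M : pred (expo N)) (x : 'I_N) (i : nat) (a : expo N) :
  (forall b, b != zero_exp N -> M (add_exp b (unit_exp x))) ->
  (i.+2 < deg_exp a)%N -> betti k (plus_var M x) i a = betti k M i a.
Proof.
move=> m_sub_colon deg_a; apply: eq_betti => F leFi; rewrite /kvalid.
case: (boolP (F \subset supp_exp a)) => //= Fa.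
by rewrite plus_var_deg_gt1 // -(ltn_add2r #|F|) -deg_sub_set_exp //; lia.
Qed.

Theorem lemma3p8 (k : fieldType) (N : nat) (M : pred (expo N)) (x : 'I_N) :
  mono_ideal M ->
  (exists a : expo N, M a) ->
  (forall a : expo N, M (add_exp a (unit_exp x)) = (a != zero_exp N)) ->
  forall r : int, reg_le k (plus_var M x) r -> reg_le k M (Num.max (2 : int) r).
Proof.
move=> _ _ colonI_x r reg_plus i a betti_a.
have m_sub_colon b : b != zero_exp N -> M (add_exp b (unit_exp x)) by rewrite colonI_x.
have [deg_a|deg_a] := leqP (deg_exp a) i.+2.
  by rewrite le_max; apply/orP; left; lia.
by rewrite le_max reg_plus ?orbT // betti_plus_var.
Qed.
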